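(* Let $\mathcal{G}$ be a DAG and $K$ a set of nodes. Let $p_1$ be a path from $a$ to $b$ and $p_2$ a path from $c$ to $d$, both open given $K$, and suppose they intersect. Let $i$ be the node on $p_1$ closest to $a$ at which $p_1$ and $p_2$ intersect, and let $p=p_1(a,i)\oplus p_2(i,d)$. Then $p$ is closed given $K$ if and only if $K\cap\mathrm{de}(i)=\emptyset$ and $i$ is a collider on $p$.
   Context: A path is a sequence of distinct nodes with consecutive nodes adjacent; for a path $p$ through nodes $u$ and $v$, $p(u,v)$ is its subpath from $u$ to $v$, and $p\oplus q$ is the concatenation of a path ending at a node with a path starting at that node. A node $k$ on a path is a collider if the path has consecutive edges $u\to k\leftarrow w$, otherwise a non-collider. $\mathrm{de}(i)$ is the set of descendants of $i$, i.e. nodes reachable by a directed path from $i$, where by convention $i\in\mathrm{de}(i)$. A path is open given $K$ if every non-collider on it is outside $K$ and every collider on it has a descendant in $K$; otherwise it is closed given $K$. *)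

From mathcomp Require Import all_boot.
Set Implicit Arguments. Unset Strict Implicit. Unset Printing Implicit Defensive.

Section Graphs.
Variable T : finType.
Variable E : rel T.

Definition is_dag : Prop := forall u v, E u v -> ~~ connect E v u.

Definition adj : rel T := fun u v => E u v || E v u.

Definition is_path_from (a b : T) (p : seq T) : Prop :=
  [/\ p = a :: behead p, last a (behead p) = b, uniq p & path adj a (behead p)].

(* de(i) : descendants of i (reflexive), via a directed path. *)
Definition de (i : T) : {set T} := [set j | connect E i j].

Definition collider (p : seq T) (x : T) : bool :=
  let k := index x p in
  [&& x \in p, 0 < k, k.+1 < size p, E (nth x p k.-1) x & E (nth x p k.+1) x].

Definition open_given (K : {set T}) (p : seq T) : Prop :=
  forall x, x \in p ->
    if collider p x then (K :&: de x) != set0 else x \notin K.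

Definition closed_given (K : {set T}) (p : seq T) : Prop := ~ open_given K p.

End Graphs.

(* Subpaths p(a,u) (prefix ending at u) and p(u,b) (suffix starting at u),
   and concatenation p (+) q of p ending at a node with q starting there. *)
Definition subpath_to (T : eqType) (p : seq T) (u : T) := take (index u p).+1 p.
Definition subpath_from (T : eqType) (p : seq T) (u : T) := drop (index u p) p.
Definition path_cat (T : eqType) (p q : seq T) := p ++ behead q.

From mathcomp Require Import all_boot.
From mathcomp Require Import zify.

Set Implicit Arguments. Unset Strict Implicit. Unset Printing Implicit Defensive.

(* Write p1 = s1 ++ i :: r1 and p2 = s2 ++ i :: t2, so that p = s1 ++ i :: t2.
   A node of s1 has the same neighbours on p as on p1, and a node of t2 the
   same neighbours on p as on p2 (s1 avoids p2 by the choice of i), so p can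
   only be blocked at i.  If i is a collider on p, it is blocked there exactly
   when K meets no descendant of i.  If it is not, it is blocked exactly when
   i is in K; but then i is a collider on both open paths p1 and p2, hence on
   p, whose two edges at i come one from p1 and one from p2. *)

Section Colliders.

Variables (T : finType) (E : rel T).

Lemma collider_catl (s t : seq T) (y x : T) : x \in s ->
  collider E (s ++ y :: t) x = collider E (rcons s y) x.
Proof.
move=> xs; rewrite -cats1 /collider !index_cat xs !mem_cat xs !size_cat /=.
have lt_xs : index x s < size s by rewrite index_mem.
have -> : (index x s).+1 < size s + (size t).+1 by lia.
have -> : (index x s).+1 < size s + 1 by lia.
rewrite !nth_cat (leq_ltn_trans (leq_pred _) lt_xs).
by case: ltnP => // le_s; rewrite (_ : _ - _ = 0) //; lia.
Qed.

Lemma collider_catr (s t : seq T) (x : T) : x \notin s -> 0 < index x t ->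
  collider E (s ++ t) x = collider E t x.
Proof.
move=> xNs pos_x; rewrite /collider index_cat (negbTE xNs) mem_cat (negbTE xNs).
rewrite size_cat addn_gt0 pos_x orbT.
have -> : (size s + index x t).-1 = size s + (index x t).-1 by lia.
rewrite -!addnS leq_add2l.
by rewrite !nth_cat !ltnNge !leq_addr /= !addKn.
Qed.

Lemma collider_pivot (s t : seq T) (i : T) : i \notin s ->
  collider E (s ++ i :: t) i =
  [&& 0 < size s, 0 < size t, E (last i s) i & E (head i t) i].
Proof.
move=> iNs; rewrite /collider index_pivot // mem_cat mem_head orbT size_cat /=.
have -> : ((size s).+1 < size s + (size t).+1) = (0 < size t) by lia.
case: (posnP (size s)) => //= s_gt0.
rewrite nth_cat ltn_predL s_gt0 nth_last nth_cat (leq_gtF (leqnSn _)) subSnn /=.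
by case: t.
Qed.

Lemma collider_splice (s1 r1 s2 t2 : seq T) (i : T) :
  i \notin s1 -> i \notin s2 ->
  collider E (s1 ++ i :: r1) i -> collider E (s2 ++ i :: t2) i ->
  collider E (s1 ++ i :: t2) i.
Proof.
move=> iNs1 iNs2; rewrite !collider_pivot //.
by case/and4P=> -> _ -> _ /and4P[_ -> _ ->].
Qed.

End Colliders.

Section Openness.

Variables (T : finType) (E : rel T) (K : {set T}).

Definition open_at (p : seq T) (x : T) : Prop :=
  if collider E p x then K :&: de E x != set0 else x \notin K.

Lemma open_given_collider (p : seq T) (x : T) :
  open_given E K p -> x \in p -> x \in K -> collider E p x.
Proof. by move=> /(_ x) open_p /open_p; case: collider => // /negP. Qed.

Lemma open_given_splice (s1 r1 s2 t2 : seq T) (i : T) :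
  open_given E K (s1 ++ i :: r1) -> open_given E K (s2 ++ i :: t2) ->
  uniq (s2 ++ i :: t2) -> {in s1, forall x, x \notin s2 ++ i :: t2} ->
  open_given E K (s1 ++ i :: t2) <-> open_at (s1 ++ i :: t2) i.
Proof.
move=> open1 open2 uniq2 s1Np2.
split=> [open_p | open_i x]; first by apply: open_p; rewrite mem_cat mem_head orbT.
rewrite mem_cat inE => /or3P[xs1 | /eqP-> // | xt2].
  rewrite collider_catl // -(collider_catl _ r1) //.
  by apply: open1; rewrite mem_cat xs1.
have xp2 : x \in s2 ++ i :: t2 by rewrite mem_cat inE xt2 !orbT.
have xNs1 : x \notin s1 by apply/negP=> /s1Np2; rewrite xp2.
have [xNs2 xNi] : x \notin s2 /\ x != i.
  move: uniq2; rewrite cat_uniq => /and3P[_ /hasPn s2Nt2 /andP[iNt2 _]].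
  by split; [apply: s2Nt2; rewrite inE xt2 orbT | apply: contraNneq iNt2 => <-].
have pos_x : 0 < index x (i :: t2) by rewrite /= eq_sym (negbTE xNi).
rewrite collider_catr // -(@collider_catr _ _ s2) //.
exact: open2.
Qed.

End Openness.

Lemma splice_subpaths (T : eqType) (s1 r1 s2 t2 : seq T) (i : T) :
  i \notin s1 -> i \notin s2 ->
  path_cat (subpath_to (s1 ++ i :: r1) i) (subpath_from (s2 ++ i :: t2) i) =
  s1 ++ i :: t2.
Proof.
move=> iNs1 iNs2; rewrite /subpath_to /subpath_from !index_pivot //.
by rewrite -addn1 takeD take_size_cat // !drop_size_cat // /path_cat /= take0 -catA.
Qed.

Theorem lemma6p3 (T : finType) (E : rel T) (K : {set T})
  (a b c d i : T) (p1 p2 : seq T) :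
  is_dag E ->
  is_path_from E a b p1 -> is_path_from E c d p2 ->
  open_given E K p1 -> open_given E K p2 ->
  (* i is the node of p1 closest to a lying on p2 (so p1, p2 intersect) *)
  i \in p1 -> i \in p2 ->
  (forall j, j \in take (index i p1) p1 -> j \notin p2) ->
  closed_given E K (path_cat (subpath_to p1 i) (subpath_from p2 i)) <->
  (K :&: de E i = set0 /\
   collider E (path_cat (subpath_to p1 i) (subpath_from p2 i)) i).
Proof.
move=> _ [_ _ uniq1 _] [_ _ uniq2 _] open1 open2 i_p1 i_p2.
move: uniq1 open1 uniq2 open2; case/splitPr: i_p1 => s1 r1; case/splitPr: i_p2 => s2 t2.
move=> uniq1 open1 uniq2 open2.
have iNs1 : i \notin s1 by move: uniq1; rewrite uniq_catC /= mem_cat => /andP[/norP[]].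
have iNs2 : i \notin s2 by move: uniq2; rewrite uniq_catC /= mem_cat => /andP[/norP[]].
rewrite take_pivot // splice_subpaths // => s1Np2.
rewrite /closed_given (open_given_splice open1 open2 uniq2 s1Np2) /open_at.
case: ifP => [_ | Ncollider].
  by split=> [/negP/negbNE/eqP -> | [-> _]]; rewrite ?eqxx.
split=> [/negP/negbNE iK | [_ //]].
suff : collider E (s1 ++ i :: t2) i by rewrite Ncollider.
have i_at_pivot s t : i \in s ++ i :: t by rewrite mem_cat mem_head orbT.
apply: (collider_splice iNs1 iNs2).
- exact: open_given_collider open1 (i_at_pivot _ _) iK.
- exact: open_given_collider open2 (i_at_pivot _ _) iK.
Qed.
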